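(* In the biased planner's myopic problem described in the context, for every $b\in(p,1]$, $\pi^0_B(b)=p$.
   Context: A binary state $\omega\in\{G,B\}$; for an agent with public belief $b$ and private signal precision $q\in[0.5,1]$ (signal matches $\omega$ with probability $q$), the action is the signal if $1-q\le b\le q$, $G$ if $b>q$, $B$ if $b<1-q$. Let $z(b,q)=b+q-2bq$. The biased planner has baseline precision $p\in[0.5,1)$, cost $\beta:[0,1]\to[0,\infty)$ non-negative, increasing, continuous, concave with $\beta(0)=0$, and $C>0$; its instantaneous reward is $r_B(b,q)=-\beta(|q-p|)-Cz(b,q)$ if $q\ge\max(b,1-b)$, $-\beta(|q-p|)-C$ if $b<1-q$, and $-\beta(|q-p|)$ if $b>q$. The myopic optimal precision $\pi^0_B(b)$ is a maximizer of $q\mapsto r_B(b,q)$ over $[0.5,1]$. *)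

From Stdlib Require Import Reals Lra.
Open Scope R_scope.

Definition z (b q : R) : R := b + q - 2 * b * q.

Definition r_B (beta : R -> R) (p C b q : R) : R :=
  if Rle_dec (Rmax b (1 - b)) q then - beta (Rabs (q - p)) - C * z b q
  else if Rlt_dec b (1 - q) then - beta (Rabs (q - p)) - C
  else - beta (Rabs (q - p)).

Definition is_myopic_opt (beta : R -> R) (p C b q : R) : Prop :=
  1/2 <= q <= 1 /\
  forall q', 1/2 <= q' <= 1 -> r_B beta p C b q' <= r_B beta p C b q.

Definition cost_ok (beta : R -> R) : Prop :=
  beta 0 = 0 /\
  (forall x, 0 <= x <= 1 -> 0 <= beta x) /\
  (forall x y, 0 <= x -> x < y -> y <= 1 -> beta x < beta y) /\
  (forall x, 0 <= x <= 1 -> limit1_in beta (fun y => 0 <= y <= 1) (beta x) x) /\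
  (forall x y t, 0 <= x <= 1 -> 0 <= y <= 1 -> 0 <= t <= 1 ->
     t * beta x + (1 - t) * beta y <= beta (t * x + (1 - t) * y)).

(* When b > p the agent with precision p ignores its signal and takes action G,
   so precision p costs the planner nothing: r_B(b,p) = -beta(0) = 0.  Every
   other precision q has r_B(b,q) <= -beta(|q-p|) < 0, because the error term
   -C z(b,q) (or -C) is never positive and beta vanishes only at 0. *)

From Stdlib Require Import Reals Lra Psatz.
Open Scope R_scope.

Lemma z_nonneg (b q : R) : 0 <= b <= 1 -> 0 <= q <= 1 -> 0 <= z b q.
Proof. intros Hb Hq. unfold z. nra. Qed.

Lemma r_B_le_opp_cost (beta : R -> R) (p C b q : R) :
  0 <= C -> 0 <= b <= 1 -> 0 <= q <= 1 ->
  r_B beta p C b q <= - beta (Rabs (q - p)).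
Proof.
  intros HC Hb Hq. pose proof (z_nonneg b q Hb Hq).
  unfold r_B.
  destruct (Rle_dec (Rmax b (1 - b)) q); [nra|].
  destruct (Rlt_dec b (1 - q)); lra.
Qed.

Lemma r_B_herd_G (beta : R -> R) (p C b q : R) :
  1/2 <= q < b -> r_B beta p C b q = - beta (Rabs (q - p)).
Proof.
  intros Hq. unfold r_B.
  destruct (Rle_dec (Rmax b (1 - b)) q) as [Hle|_].
  - pose proof (Rmax_l b (1 - b)). lra.
  - destruct (Rlt_dec b (1 - q)); [lra | reflexivity].
Qed.

Lemma cost_pos (beta : R -> R) (x : R) :
  cost_ok beta -> 0 < x <= 1 -> 0 < beta x.
Proof.
  intros [Hbeta0 [_ [Hincr _]]] Hx. rewrite <- Hbeta0. apply Hincr; lra.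
Qed.

Lemma r_B_baseline (beta : R -> R) (p C b : R) :
  cost_ok beta -> 1/2 <= p < b -> r_B beta p C b p = 0.
Proof.
  intros [Hbeta0 _] Hpb.
  rewrite r_B_herd_G by lra.
  rewrite Rminus_diag, Rabs_R0, Hbeta0. ring.
Qed.

Lemma r_B_neg_off_baseline (beta : R -> R) (p C b q : R) :
  cost_ok beta -> 0 <= C -> 0 <= b <= 1 -> 0 <= p <= 1 -> 0 <= q <= 1 ->
  q <> p -> r_B beta p C b q < 0.
Proof.
  intros Hbeta HC Hb Hp Hq Hqp.
  assert (Hcost : 0 < beta (Rabs (q - p))).
  { apply cost_pos; [exact Hbeta | split].
    - apply Rabs_pos_lt. lra.
    - apply Rabs_le. lra. }
  pose proof (r_B_le_opp_cost beta p C b q HC Hb Hq). lra.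
Qed.

Theorem lemma12 (beta : R -> R) (p C : R) :
  cost_ok beta -> 1/2 <= p < 1 -> 0 < C ->
  forall b, p < b <= 1 ->
  forall q, is_myopic_opt beta p C b q <-> q = p.
Proof.
  intros Hbeta Hp HC b Hb q.
  assert (Hbase : r_B beta p C b p = 0) by (apply r_B_baseline; [exact Hbeta | lra]).
  assert (Hneg : forall q', 1/2 <= q' <= 1 -> q' <> p -> r_B beta p C b q' < 0).
  { intros q' Hq' Hq'p. apply r_B_neg_off_baseline; auto; lra. }
  split.
  - intros [Hq Hmax].
    destruct (Req_dec q p) as [Hqp|Hqp]; [exact Hqp|].
    pose proof (Hmax p ltac:(lra)). pose proof (Hneg q Hq Hqp). lra.
  - intros ->. split; [lra|].
    intros q' Hq'. rewrite Hbase.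
    destruct (Req_dec q' p) as [->|Hq'p]; [lra|].
    pose proof (Hneg q' Hq' Hq'p). lra.
Qed.
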